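(* Let $k\geq 1$ be an integer. For every natural number $n\geq 1$, $\sigma_k(B_n)\leq B_{\sigma_k(n)}$, and equality holds only if $n=1$.
   Context: The balancing numbers $(B_n)_{n\geq 0}$ are defined by $B_0=0$, $B_1=1$, $B_{n+1}=6B_n-B_{n-1}$ for $n\geq 1$ (so $B_n=\frac{\alpha^n-\beta^n}{\alpha-\beta}$ with $\alpha=3+2\sqrt2$, $\beta=3-2\sqrt2$). For a positive integer $m$, $\sigma_k(m)$ denotes the sum of the $k$-th powers of the positive divisors of $m$. *)

From mathcomp Require Import all_boot.
Set Implicit Arguments. Unset Strict Implicit. Unset Printing Implicit Defensive.

(* Balancing numbers: B_0 = 0, B_1 = 1, B_{n+2} = 6 B_{n+1} - B_n.
   We compute the pair (B_n, B_{n+1}) to get a structural recursion.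
   Subtraction is truncated on nat, but 6 B_{n+1} >= B_n always holds
   (the sequence is increasing), so this is the genuine recurrence. *)
Fixpoint balpair (n : nat) : nat * nat :=
  match n with
  | 0 => (0, 1)
  | m.+1 => let: (a, b) := balpair m in (b, 6 * b - a)
  end.

Definition balancing (n : nat) : nat := (balpair n).1.

Definition sigma (k m : nat) : nat := \sum_(d <- divisors m) d ^ k.

(* For k = 1 and an odd prime p, every prime factor q of B_p satisfies
   q >= 2p - 1: the Frobenius map on (3 + X)^q gives B_q = 8^((q-1)/2) mod q,
   so q divides B_(q-1) B_(q+1) by Cassini's identity, and a prime dividing
   both B_p and B_j forces p | j by strong divisibility.  Having few and large
   prime factors, B_p has sigma(B_p) < 4 B_p < B_(p+1).  For composite n = s b
   with s the least prime factor, sigma(B_n) <= 3(n-1) B_n <= 5^b B_n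
   <= B_(n+b) < B_(sigma n).  General k follows from
   sigma_k(m) <= m^(k-1) sigma(m), B_a^j B_c <= B_(ja+c) and
   (k-1) n + sigma(n) <= sigma_k(n). *)

From mathcomp Require Import all_boot all_algebra cyclic zify ring.
Set Implicit Arguments. Unset Strict Implicit. Unset Printing Implicit Defensive.

Lemma leq_sum_uniq_subset (I : eqType) (s s' : seq I) (F : I -> nat) :
  uniq s -> {subset s <= s'} -> \sum_(i <- s) F i <= \sum_(i <- s') F i.
Proof.
move=> s_uniq ss'; apply: (sub_le_big_seq leqnn (fun m n => leq_addr n m)) => i.
rewrite count_uniq_mem //; case: (boolP (i \in s)) => // /ss' i_s'.
by rewrite lt0n; apply/negP => /eqP/count_memPn; rewrite i_s'.
Qed.

Lemma sigmak1 k : sigma k 1 = 1.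
Proof. by rewrite /sigma /divisors /= big_seq1 exp1n. Qed.

Lemma sigma1E m : sigma 1 m = \sum_(d <- divisors m) d.
Proof. by apply: eq_bigr => d _; rewrite expn1. Qed.

Lemma leq_sum_divisors k n s :
  0 < n -> uniq s -> {in s, forall d, d %| n} -> \sum_(d <- s) d ^ k <= sigma k n.
Proof.
move=> n_gt0 s_uniq s_dvd; apply: leq_sum_uniq_subset => // d d_s.
by rewrite -dvdn_divisors // s_dvd.
Qed.

Lemma sigma1_mul_prime q m :
  prime q -> 0 < m -> sigma 1 (q * m) <= (q + 1) * sigma 1 m.
Proof.
move=> q_pr m_gt0; have q_gt0 := prime_gt0 q_pr.
rewrite !sigma1E mulnDl mul1n addnC big_distrr -(big_map (muln q) xpredT id) -big_cat.
apply: leq_sum_uniq_subset; first exact: divisors_uniq.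
move=> d; rewrite -dvdn_divisors ?muln_gt0 ?q_gt0 // mem_cat => d_qm.
have [q_d | q_nd] := boolP (q %| d).
  apply/orP; right; apply/mapP; exists (d %/ q); last by rewrite mulnC divnK.
  by rewrite -dvdn_divisors // -(dvdn_pmul2l q_gt0) mulnC divnK.
have d_q : coprime d q by rewrite coprime_sym prime_coprime.
by rewrite -dvdn_divisors // -(Gauss_dvdr _ d_q) d_qm.
Qed.

(* m has fewer than r prime factors, all >= P; the i-th one multiplies
   sigma(m)/m by at most (P - i)/(P - i - 1), and these factors telescope. *)
Lemma leq_sigma1_large_prime_factors P r m :
  0 < m -> m < P ^ r -> (forall q, prime q -> q %| m -> P <= q) ->
  sigma 1 m * (P - r) <= m * P.
Proof.
elim: r m => [|r IH] m m_gt0 m_lt P_le; first by rewrite expn0 in m_lt; lia.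
have [m_le1 | m_gt1] := leqP m 1.
  by rewrite (_ : m = 1) ?sigmak1; lia.
have q_pr := pdiv_prime m_gt1; have q_m := pdiv_dvd m.
set q := pdiv m in q_pr q_m; have P_q := P_le q q_pr q_m.
set m' := m %/ q; have m_eq : m = q * m' by rewrite /m' mulnC divnK.
have m'_gt0 : 0 < m' by rewrite divn_gt0 ?prime_gt0 // dvdn_leq.
have P_gt0 : 0 < P.
  by rewrite lt0n; apply: contraTneq m_lt => ->; rewrite exp0n // ltn0.
have m'_lt : m' < P ^ r.
  rewrite -(ltn_pmul2l P_gt0) -expnS; apply: leq_ltn_trans m_lt.
  by rewrite m_eq leq_mul2r P_q orbT.
have m'_dvd : m' %| m by rewrite m_eq dvdn_mull.
have IHm' := IH m' m'_gt0 m'_lt (fun p p_pr p_m' => P_le p p_pr (dvdn_trans p_m' m'_dvd)).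
have := sigma1_mul_prime q_pr m'_gt0; rewrite -m_eq => sigma_m.
have [P_le_r | r_lt_P] := leqP P r.+1; first by rewrite (eqP P_le_r) muln0.
have key : (q + 1) * (P - r.+1) <= q * (P - r) by lia.
apply: (leq_trans (leq_mul sigma_m (leqnn _))).
apply: (@leq_trans (sigma 1 m' * (q * (P - r)))).
  by rewrite mulnAC mulnC leq_mul2l key orbT.
by rewrite m_eq mulnCA -[leqRHS]mulnA leq_mul2l IHm' orbT.
Qed.

Lemma sum_divn_exp2_le m j : \sum_(1 <= d < 2 ^ j) m %/ d <= j * m.
Proof.
elim: j => [|j IH]; first by rewrite big_geq.
rewrite (@big_cat_nat _ _ _ (2 ^ j)) ?expn_gt0 ?leq_pexp2l //= mulSn addnC leq_add //.
apply: (@leq_trans (\sum_(2 ^ j <= d < 2 ^ j.+1) m %/ 2 ^ j)).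
  by rewrite !big_nat; apply: leq_sum => d /andP[d_ge _]; rewrite leq_div2l ?expn_gt0.
by rewrite sum_nat_const_nat expnS mul2n -addnn addnK mulnC leq_divM.
Qed.

Lemma sigma1_codivisors m : 0 < m -> sigma 1 m = \sum_(d <- divisors m) m %/ d.
Proof.
move=> m_gt0; rewrite sigma1E -(big_map (divn m) xpredT id).
apply: perm_big; apply: uniq_perm; rewrite ?divisors_uniq //.
  rewrite map_inj_in_uniq ?divisors_uniq // => d e.
  rewrite -!dvdn_divisors // => d_m e_m /(congr1 (divn m)).
  by rewrite !divnA // !mulKn.
move=> d; apply/idP/mapP => [d_m | [e e_m ->]].
  have d_dvd : d %| m by rewrite dvdn_divisors.
  by exists (m %/ d); rewrite -?dvdn_divisors ?dvdn_div // divnA // mulKn.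
by move: e_m; rewrite -!dvdn_divisors // => /dvdn_div.
Qed.

Lemma leq_sigma1_exp2 m j : 0 < m -> m < 2 ^ j -> sigma 1 m <= j * m.
Proof.
move=> m_gt0 m_lt; rewrite sigma1_codivisors //.
apply: leq_trans (sum_divn_exp2_le m j); apply: leq_sum_uniq_subset.
  exact: divisors_uniq.
move=> d; rewrite -dvdn_divisors // mem_iota => d_m.
have d_lt : d < 2 ^ j := leq_ltn_trans (dvdn_leq m_gt0 d_m) m_lt.
by rewrite (dvdn_gt0 m_gt0 d_m) subnKC ?expn_gt0.
Qed.

Lemma leq_sigmaD k j m : 0 < m -> sigma (k + j) m <= m ^ k * sigma j m.
Proof.
move=> m_gt0; rewrite /sigma big_distrr /= !big_seq.
apply: leq_sum => d; rewrite -dvdn_divisors // => d_m.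
rewrite expnD leq_mul2r; case: k => [|k]; first by rewrite orbT.
by rewrite leq_exp2r // (dvdn_leq m_gt0 d_m) orbT.
Qed.

Lemma leq_sigmaS k n : 1 < n -> k * n + sigma 1 n <= sigma k.+1 n.
Proof.
move=> n_gt1; have n_gt0 := ltnW n_gt1.
have n_div : n \in divisors n by rewrite -dvdn_divisors.
rewrite /sigma !(bigD1_seq n n_div (divisors_uniq n)) addnA leq_add //.
  by have := ltn_expl k n_gt1; rewrite expn1 expnS; nia.
by apply: leq_sum => -[|d] _ //; rewrite leq_pexp2l.
Qed.

Lemma leq_succ_sigma1 n : 1 < n -> n.+1 <= sigma 1 n.
Proof.
move=> n_gt1; have := @leq_sum_divisors 1 n [:: 1; n].
rewrite !big_cons big_nil !expn1 addn0 add1n; apply; first exact: ltnW.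
  by rewrite /= inE ltn_eqF.
by move=> d; rewrite !inE => /orP[] /eqP->.
Qed.

Lemma leq_divisor_sigma1 n b : 1 < b -> b < n -> b %| n -> b + n.+1 <= sigma 1 n.
Proof.
move=> b_gt1 b_lt b_n; have := @leq_sum_divisors 1 n [:: b; 1; n].
rewrite !big_cons big_nil !expn1 addn0 add1n; apply; first lia.
  by rewrite /= !inE !negb_or gtn_eqF // !ltn_eqF // (ltn_trans b_gt1).
by move=> d; rewrite !inE => /orP[/eqP-> | /orP[] /eqP->].
Qed.

Local Notation B := balancing.

Lemma balancingSS_sub n : B n.+2 = 6 * B n.+1 - B n.
Proof. by rewrite /B /=; case: (balpair n). Qed.

Lemma balancing_leqS n : B n <= B n.+1.
Proof. by elim: n => // n IH; rewrite balancingSS_sub; lia. Qed.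

Lemma balancingSS n : B n.+2 + B n = 6 * B n.+1.
Proof. by have := balancing_leqS n; rewrite balancingSS_sub; lia. Qed.

Lemma leq_mul5_balancingS n : 5 * B n <= B n.+1.
Proof.
by case: n => // n; have := balancing_leqS n; have := balancingSS n; lia.
Qed.

Lemma balancing_gt0 n : (0 < B n) = (0 < n).
Proof.
by elim: n => // n IH; have := leq_mul5_balancingS n; case: n IH => //; lia.
Qed.

Lemma ltn_balancingS n : B n < B n.+1.
Proof.
by have := leq_mul5_balancingS n; have := balancing_gt0 n.+1; lia.
Qed.

Lemma leq_balancing : {mono B : m n / m <= n}.
Proof. by apply: leq_mono; apply: homo_ltn ltn_balancingS; apply: ltn_trans. Qed.

Lemma ltn_balancing : {mono B : m n / m < n}.
Proof. by move=> m n; rewrite !ltnNge leq_balancing. Qed.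

Lemma balancingD m n : B (m + n).+1 + B m * B n = B m.+1 * B n.+1.
Proof.
elim/ltn_ind: n m => -[|[|n]] IH m.
- by rewrite addn0 muln0 addn0 muln1.
- by rewrite muln1 addn1 mulnC balancingSS.
- have IH1 := IH n.+1 (ltnSn _) m; have IH0 := IH n (leqW (ltnSn _)) m.
  have R1 := balancingSS (m + n).+1; have R2 := balancingSS n.+1.
  have R3 := balancingSS n.
  rewrite !addnS in IH1 IH0 R1 *; nia.
Qed.

Lemma balancing_cassini n : B n.+1 ^ 2 = B n * B n.+2 + 1.
Proof.
elim: n => // n IH; have := balancingSS n.+1; have := balancingSS n; nia.
Qed.

Lemma balancing_odd n : odd (B n) = odd n.
Proof.
elim/ltn_ind: n => -[|[|n]] IH //.
have /(congr1 odd) := balancingSS n.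
rewrite oddD oddM (IH n (leqW (ltnSn n))) /= negbK.
by case: (odd (B n.+2)); case: (odd n).
Qed.

Lemma leq_balancing_exp6 n : B n.+1 <= 6 ^ n.
Proof. by elim: n => // n IH; have := balancingSS n; rewrite expnS; lia. Qed.

Lemma leq_exp5_mul_balancing n t : 5 ^ t * B n <= B (n + t).
Proof.
elim: t => [|t IH]; first by rewrite mul1n addn0.
by rewrite expnS -mulnA addnS; apply: leq_trans (leq_mul5_balancingS _); lia.
Qed.

Lemma leq_mul_balancing a b : B a * B b <= B (a + b).
Proof.
elim: a b => [|a IH] [|b] //; first by rewrite muln0.
have := balancingD a b; have := IH b; have := balancing_leqS (a + b).
have := leq_mul5_balancingS (a + b).+1.
by rewrite addSn addnS; lia.
Qed.

Lemma leq_exp_mul_balancing n j x : B n ^ j * B x <= B (j * n + x).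
Proof.
elim: j => [|j IH]; first by rewrite mul1n.
rewrite expnS -mulnA mulSn -addnA.
by apply: leq_trans (leq_mul_balancing _ _); rewrite leq_mul2l IH orbT.
Qed.

Lemma coprime_balancingS n : coprime (B n) (B n.+1).
Proof.
rewrite /coprime -dvdn1; set g := gcdn _ _.
have g_sq : g %| B n.+1 ^ 2 by rewrite dvdn_exp // dvdn_gcdr.
rewrite balancing_cassini in g_sq.
by rewrite -(dvdn_addr 1 (dvdn_mulr (B n.+2) (dvdn_gcdl _ _))).
Qed.

Lemma dvdn_balancing_addl d a c : d %| B a -> (d %| B (a + c)) = (d %| B c).
Proof.
case: a => // a d_a; rewrite addSn.
have d_sum : d %| B (a + c).+1 + B a * B c by rewrite balancingD dvdn_mulr.
have d_Ba : coprime d (B a).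
  by apply: coprime_dvdl d_a _; rewrite coprime_sym coprime_balancingS.
apply/idP/idP => h.
- by rewrite -(Gauss_dvdr _ d_Ba) -(dvdn_addr _ h).
- by rewrite -(dvdn_addl _ (dvdn_mull (B a) h)).
Qed.

Lemma dvdn_balancing_gcd d a b : d %| B a -> d %| B b -> d %| B (gcdn a b).
Proof.
have [n] := ubnP (a + b); elim: n a b => // n IH a b lt_ab.
wlog le_ab : a b lt_ab / a <= b => [W|].
  have [|/ltnW le_ba] := leqP a b; first exact: W.
  by rewrite gcdnC => d_a d_b; apply: W; rewrite // addnC.
have [-> _ d_b | a_gt0 d_a] := posnP a; first by rewrite gcd0n.
rewrite -(subnKC le_ab) gcdnDl (dvdn_balancing_addl _ d_a).
by apply: IH d_a; lia.
Qed.

Section BalancingPoly.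
Import GRing.Theory.
Local Open Scope ring_scope.

Lemma even_polyXn (R : nzRingType) h : even_poly ('X^(h.*2) : {poly R}) = 'X^h.
Proof.
apply/polyP => i; rewrite coef_even_poly !coefXn.
by rewrite (inj_eq (can_inj doubleK)).
Qed.

Section Horner.
Variable R : comNzRingType.
Local Notation w n := ((3%:P + 'X : {poly R}) ^+ n).

Lemma horner_odd_polyS n :
  (odd_poly (w n.+1)).[8] = 3 * (odd_poly (w n)).[8] + (even_poly (w n)).[8].
Proof.
by rewrite exprSr mulrDr mulrC mul_polyC odd_polyD odd_polyZ odd_polyMX hornerD hornerZ.
Qed.

Lemma horner_even_polyS n :
  (even_poly (w n.+1)).[8] = 3 * (even_poly (w n)).[8] + (odd_poly (w n)).[8] * 8.
Proof.
rewrite exprSr mulrDr mulrC mul_polyC even_polyD even_polyZ even_polyMX.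
by rewrite hornerD hornerZ hornerMX.
Qed.

(* With (3 + X)^n = E(X^2) + X O(X^2), evaluating at X = sqrt 8 shows
   O(8) = ((3 + sqrt 8)^n - (3 - sqrt 8)^n) / (2 sqrt 8) = B_n. *)
Lemma horner_odd_poly_balancing n : (odd_poly (w n)).[8] = (B n)%:R.
Proof.
elim/ltn_ind: n => -[|[|n]] IH.
- by rewrite expr0 odd_polyC horner0.
- by rewrite horner_odd_polyS expr0 odd_polyC even_polyC horner0 hornerC mulr0 add0r.
- apply: (addIr (B n)%:R); rewrite -natrD balancingSS natrM.
  rewrite -(IH n (leqW (ltnSn n))) -(IH n.+1 (ltnSn n.+1)).
  by rewrite !horner_odd_polyS horner_even_polyS; ring.
Qed.

End Horner.

Lemma balancing_prime_mod q : prime q -> odd q -> B q = 8 ^ q./2 %[mod q].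
Proof.
move=> q_pr q_odd.
have q_char : q \in [pchar {poly 'F_q}] by rewrite pchar_poly; exact: pchar_Fp.
have frobenius : (3%:P + 'X : {poly 'F_q}) ^+ q = 3%:P + 'X^q.
  rewrite -[LHS](pFrobenius_autE q_char) pFrobenius_autD_comm; last exact: commr_polyX.
  rewrite !pFrobenius_autE -polyC_exp.
  by rewrite -(pFrobenius_autE (pchar_Fp q_pr)) pFrobenius_aut_nat.
have Xq : 'X^q = 'X^(q./2.*2) * 'X :> {poly 'F_q}.
  by rewrite -exprSr odd_halfK // prednK // prime_gt0.
have /(congr1 (@nat_of_ord _)) : (B q)%:R = (8 ^ q./2)%:R :> 'F_q.
  rewrite -horner_odd_poly_balancing frobenius odd_polyD odd_polyC add0r Xq.
  by rewrite odd_polyMX even_polyXn hornerXn natrX.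
by rewrite !(val_Fp_nat q_pr).
Qed.

End BalancingPoly.

Lemma prime_dvd_balancing_predS q : prime q -> odd q -> q %| B q.-1 * B q.+1.
Proof.
move=> q_pr q_odd.
have coprime_8q : coprime 8 q.
  rewrite (_ : 8 = 2 ^ 3) // coprimeXl // prime_coprime // dvdn_prime2 //.
  by apply: contraTneq q_odd => <-.
have sq_mod : B q ^ 2 = 1 %[mod q].
  rewrite -modnXm balancing_prime_mod // modnXm -expnM muln2 odd_halfK //.
  by rewrite -(totient_prime q_pr) Euler_exp_totient.
have := balancing_cassini q.-1; rewrite prednK ?prime_gt0 // => cassini.
have /eqP : B q.-1 * B q.+1 + 1 = 0 + 1 %[mod q] by rewrite -cassini.
by rewrite eqn_modDr mod0n.
Qed.

Lemma dvdn_balancing_prime_index d p j :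
  prime p -> 1 < d -> d %| B p -> d %| B j -> p %| j.
Proof.
move=> p_pr d_gt1 d_p /(dvdn_balancing_gcd d_p).
case/primeP: p_pr => _ /(_ _ (dvdn_gcdl p j)) /orP[/eqP -> | /eqP <-].
- by rewrite (_ : B 1 = 1) // dvdn1 gtn_eqF.
- by rewrite dvdn_gcdr.
Qed.

Lemma prime_factor_balancing_prime p q :
  prime p -> odd p -> prime q -> q %| B p -> p.*2 <= q.+1.
Proof.
move=> p_pr p_odd q_pr q_Bp.
have q_odd : odd q.
  case: (even_prime q_pr) => // q2; move: q_Bp.
  by rewrite q2 dvdn2 balancing_odd p_odd.
have even_index j : 0 < j -> ~~ odd j -> q %| B j -> p.*2 <= j.
  move=> j_gt0 j_even q_j; rewrite -mul2n; apply: dvdn_leq j_gt0 _.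
  rewrite Gauss_dvd ?coprime2n // dvdn2 j_even.
  exact: dvdn_balancing_prime_index p_pr (prime_gt1 q_pr) q_Bp q_j.
have q_gt2 := odd_prime_gt2 q_odd q_pr.
have := prime_dvd_balancing_predS q_pr q_odd; rewrite Euclid_dvdM // => /orP[] q_j.
- suff : p.*2 <= q.-1 by lia.
  by apply: even_index q_j; [lia | rewrite -odd_halfK // odd_double].
- by apply: even_index q_j; rewrite //= q_odd.
Qed.

Lemma mul3_sqr_lt_exp5 b : 3 * b ^ 2 < 5 ^ b.
Proof.
elim: b => // -[|b] IH //; move: IH.
rewrite -!mulnn (expnS 5 b.+1); nia.
Qed.

Lemma sigma1_balancing_odd_prime p :
  prime p -> odd p -> sigma 1 (B p) < B (sigma 1 p).
Proof.
move=> p_pr p_odd; set h := p./2.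
have p_eq : p = h.*2.+1 by rewrite /h odd_halfK // prednK // prime_gt0.
have h_gt0 : 0 < h by have := odd_prime_gt2 p_odd p_pr; lia.
have m_gt0 : 0 < B p by rewrite balancing_gt0 prime_gt0.
have m_lt : B p < (4 * h).+1 ^ (3 * h).
  apply: (@leq_ltn_trans (6 ^ h.*2)); first by rewrite p_eq leq_balancing_exp6.
  rewrite -mul2n !expnM; apply: (@leq_trans (125 ^ h)); first by rewrite ltn_exp2r.
  by rewrite leq_exp2r // (_ : 125 = 5 ^ 3) // leq_exp2r //; lia.
have factors_ge : forall q, prime q -> q %| B p -> (4 * h).+1 <= q.
  by move=> q q_pr q_p; have := prime_factor_balancing_prime p_pr p_odd q_pr q_p; lia.
have := leq_sigma1_large_prime_factors m_gt0 m_lt factors_ge.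
rewrite (_ : (4 * h).+1 - 3 * h = h.+1); last by lia.
move=> sigma_m; apply: (@leq_trans (B p.+1)).
  by have := leq_mul5_balancingS p; nia.
by rewrite leq_balancing leq_succ_sigma1 ?prime_gt1.
Qed.

Lemma sigma1_balancing_composite n :
  1 < n -> ~~ prime n -> sigma 1 (B n) < B (sigma 1 n).
Proof.
move=> n_gt1 n_npr; have n_gt0 := ltnW n_gt1.
have s_pr := pdiv_prime n_gt1; have s_n := pdiv_dvd n.
set s := pdiv n in s_pr s_n; set b := n %/ s.
have n_eq : n = s * b by rewrite /b mulnC divnK.
have s_lt : s < n.
  by rewrite ltn_neqAle dvdn_leq // andbT; apply: contraNneq n_npr => <-.
have b_gt1 : 1 < b by move: s_lt; rewrite n_eq; nia.
have b_n : b %| n by rewrite n_eq dvdn_mull.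
have s_le : s <= b by apply: pdiv_min_dvd.
have m_lt : B n < 2 ^ (3 * n.-1).
  have := leq_balancing_exp6 n.-1; rewrite prednK // => B_le.
  by apply: leq_ltn_trans B_le _; rewrite expnM ltn_exp2r //; lia.
have exp5_b : 3 * n.-1 <= 5 ^ b.
  by have := mul3_sqr_lt_exp5 b; rewrite n_eq -mulnn; nia.
have m_gt0 : 0 < B n by rewrite balancing_gt0.
apply: leq_ltn_trans (leq_sigma1_exp2 m_gt0 m_lt) _.
apply: (@leq_ltn_trans (B (n + b))).
  by apply: leq_trans (leq_exp5_mul_balancing n b); rewrite leq_mul2r exp5_b orbT.
have b_lt : b < n by rewrite n_eq ltn_Pmull ?prime_gt1 // ltnW.
by rewrite ltn_balancing; have := leq_divisor_sigma1 b_gt1 b_lt b_n; lia.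
Qed.

Lemma sigma1_balancing_lt n : 1 < n -> sigma 1 (B n) < B (sigma 1 n).
Proof.
move=> n_gt1; have [n_pr | ] := boolP (prime n); last exact: sigma1_balancing_composite.
have [n_odd | n_even] := boolP (odd n); first exact: sigma1_balancing_odd_prime.
have [-> | n_odd] := even_prime n_pr; last by rewrite n_odd in n_even.
by rewrite /sigma unlock.
Qed.

Lemma sigma_balancing_lt k n : 0 < k -> 1 < n -> sigma k (B n) < B (sigma k n).
Proof.
case: k => // k _ n_gt1; have m_gt0 : 0 < B n by rewrite balancing_gt0 ltnW.
have := leq_sigmaD k 1 m_gt0; rewrite addn1 => /leq_ltn_trans; apply.
apply: (@leq_trans (B n ^ k * B (sigma 1 n))).
  by rewrite ltn_pmul2l ?expn_gt0 ?m_gt0 // sigma1_balancing_lt.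
apply: leq_trans (leq_exp_mul_balancing n k (sigma 1 n)) _.
by rewrite leq_balancing leq_sigmaS.
Qed.

Theorem theorem3p1 (k : nat) (hk : 1 <= k) :
  forall n : nat, 1 <= n ->
    sigma k (balancing n) <= balancing (sigma k n) /\
    (sigma k (balancing n) = balancing (sigma k n) -> n = 1).
Proof.
move=> n n_gt0; have [n_gt1 | n_le1] := ltnP 1 n; last first.
  by rewrite (_ : n = 1) ?sigmak1; last lia.
have lt := sigma_balancing_lt hk n_gt1.
by split=> [|eq_sigma]; [exact: ltnW | move: lt; rewrite eq_sigma ltnn].
Qed.
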